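(* Let $\Gamma_2(t)=\mathbb{A}(t)+\varepsilon^*\mathbb{A}^*(t)$ be a differentiable curve in the unit hyper-dual sphere $\mathbb{S}^2_{\mathbb{D}_2}$, with $\mathbb{A}=\mathbf a_0+\varepsilon\mathbf a_1$ and $\mathbb{A}^*=\mathbf a_2+\varepsilon\mathbf a_3$ ($\mathbf a_i(t)\in\mathbb{R}^3$). Let $\Phi_2(t,\mathbb{U})=\mathbb{A}(t)\times\mathbb{A}^*(t)+\mathbb{U}\,\mathbb{A}(t)$, $\mathbb{U}\in D$, be its corresponding ruled surface in $\mathbb{D}$. Then $\Phi_2$ is developable if and only if, for all $t$, $$\mathbf a_0'\cdot\mathbf a_2'=0\quad\text{and}\quad \mathbf a_0'\cdot\mathbf a_3'=-\mathbf a_1'\cdot\mathbf a_2'.$$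
   Context: Dual numbers $D=\{a+\varepsilon a^*\}$, $\varepsilon^2=0$, $\varepsilon\ne0$. Dual vectors $\mathbb{D}=\{\mathbf a+\varepsilon\mathbf a^*:\mathbf a,\mathbf a^*\in\mathbb{R}^3\}$ with $D$-valued inner product $\langle\mathbf a+\varepsilon\mathbf a^*,\mathbf b+\varepsilon\mathbf b^*\rangle=\mathbf a\cdot\mathbf b+\varepsilon(\mathbf a^*\cdot\mathbf b+\mathbf a\cdot\mathbf b^* )$, cross product $(\mathbf a+\varepsilon\mathbf a^* )\times(\mathbf b+\varepsilon\mathbf b^* )=\mathbf a\times\mathbf b+\varepsilon(\mathbf a\times\mathbf b^*+\mathbf a^*\times\mathbf b)$, scalar multiplication by dual numbers $(u+\varepsilon u^* )(\mathbf a+\varepsilon\mathbf a^* )=u\mathbf a+\varepsilon(u\mathbf a^*+u^*\mathbf a)$, and dual determinant $\det(X,Y,Z)=\langle X,Y\times Z\rangle$. Hyper-dual vectors $\mathbb{D}_2=\{\mathbb{A}+\varepsilon^*\mathbb{A}^*:\mathbb{A},\mathbb{A}^*\in\mathbb{D}\}$ with $\varepsilon^{*2}=0$, $\varepsilon\varepsilon^*=\varepsilon^*\varepsilon\ne0$. Unit hyper-dual sphere: $\mathbb{S}^2_{\mathbb{D}_2}=\{\mathbb{A}+\varepsilon^*\mathbb{A}^*:\langle\mathbb{A},\mathbb{A}\rangle=1,\ \langle\mathbb{A},\mathbb{A}^*\rangle=0\}$. A ruled surface in $\mathbb{D}$ is $\Phi(t,\mathbb{U})=\mathbb{B}(t)+\mathbb{U}\,\mathbb{B}^*(t)$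 with $\mathbb{B},\mathbb{B}^*$ curves in $\mathbb{D}$ and $\mathbb{U}\in D$; it is called developable if $\det(\mathbb{B}'(t),\mathbb{B}^*(t),\mathbb{B}^{*\prime}(t))=0$ (as a dual number) for all $t$. Derivatives are componentwise. *)

From Stdlib Require Import Reals.
From Coquelicot Require Import Coquelicot.
Open Scope R_scope.

Record V3 := mkV3 { vx : R; vy : R; vz : R }.

Definition dot (a b : V3) : R := vx a * vx b + vy a * vy b + vz a * vz b.
Definition cross (a b : V3) : V3 :=
  mkV3 (vy a * vz b - vz a * vy b)
       (vz a * vx b - vx a * vz b)
       (vx a * vy b - vy a * vx b).
Definition vadd (a b : V3) : V3 := mkV3 (vx a + vx b) (vy a + vy b) (vz a + vz b).
Definition vscal (c : R) (a : V3) : V3 := mkV3 (c * vx a) (c * vy a) (c * vz a).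

(* Dual numbers u + eps u*, eps^2 = 0 *)
Record DN := mkDN { dre : R; ddu : R }.

(* Dual vectors a + eps a* *)
Record DV := mkDV { re : V3; du : V3 }.

Definition ddot (A B : DV) : DN :=
  mkDN (dot (re A) (re B)) (dot (du A) (re B) + dot (re A) (du B)).
Definition dcross (A B : DV) : DV :=
  mkDV (cross (re A) (re B)) (vadd (cross (re A) (du B)) (cross (du A) (re B))).
Definition dscal (u : DN) (A : DV) : DV :=
  mkDV (vscal (dre u) (re A)) (vadd (vscal (dre u) (du A)) (vscal (ddu u) (re A))).
Definition dvadd (A B : DV) : DV := mkDV (vadd (re A) (re B)) (vadd (du A) (du B)).
Definition ddet (X Y Z : DV) : DN := ddot X (dcross Y Z).

Definition V3_differentiable (f : R -> V3) : Prop :=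
  forall t, ex_derive (fun s => vx (f s)) t /\ ex_derive (fun s => vy (f s)) t
            /\ ex_derive (fun s => vz (f s)) t.
Definition V3_derive (f : R -> V3) (t : R) : V3 :=
  mkV3 (Derive (fun s => vx (f s)) t) (Derive (fun s => vy (f s)) t)
       (Derive (fun s => vz (f s)) t).
Definition DV_derive (F : R -> DV) (t : R) : DV :=
  mkDV (V3_derive (fun s => re (F s)) t) (V3_derive (fun s => du (F s)) t).

Definition ruled_surface (B Bs : R -> DV) (t : R) (U : DN) : DV :=
  dvadd (B t) (dscal U (Bs t)).

Definition developable (B Bs : R -> DV) : Prop :=
  forall t, ddet (DV_derive B t) (Bs t) (DV_derive Bs t) = mkDN 0 0.

(* Hyper-dual vector A + eps* A*, and the unit hyper-dual sphere *)
Record HDV := mkHDV { hre : DV; hdu : DV }.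
Definition on_hyperdual_sphere (G : HDV) : Prop :=
  ddot (hre G) (hre G) = mkDN 1 0 /\ ddot (hre G) (hdu G) = mkDN 0 0.

(* The base curve of Φ₂ is B = A × A* and its director is A, so developability asks that
   det(B', A, A') = ⟨(A' × A* + A × A*'), A × A'⟩ vanish.  By the Lagrange identity this is
   ⟨A',A⟩⟨A*,A'⟩ - ⟨A',A'⟩⟨A*,A⟩ + ⟨A,A⟩⟨A*',A'⟩ - ⟨A,A'⟩⟨A*',A⟩, and on the sphere
   ⟨A,A⟩ = 1, ⟨A,A*⟩ = 0 and (differentiating the first) ⟨A,A'⟩ = 0, so only ⟨A',A*'⟩
   survives; its real and dual parts are the two stated conditions. *)
From Stdlib Require Import Reals Lra.
From Coquelicot Require Import Coquelicot.
Open Scope R_scope.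

Lemma ex_derive_mult_minus (f g h k : R -> R) t :
  ex_derive f t -> ex_derive g t -> ex_derive h t -> ex_derive k t ->
  ex_derive (fun s => f s * g s - h s * k s) t.
Proof.
  intros Hf Hg Hh Hk.
  auto_derive; auto.
Qed.

Lemma Derive_mult_minus (f g h k : R -> R) t :
  ex_derive f t -> ex_derive g t -> ex_derive h t -> ex_derive k t ->
  Derive (fun s => f s * g s - h s * k s) t =
  (Derive f t * g t + f t * Derive g t) - (Derive h t * k t + h t * Derive k t).
Proof.
  intros Hf Hg Hh Hk.
  rewrite Derive_minus by (apply ex_derive_mult; assumption).
  rewrite !Derive_mult by assumption.
  reflexivity.
Qed.

Lemma Derive_dot (f g : R -> V3) t :
  V3_differentiable f -> V3_differentiable g ->
  Derive (fun s => dot (f s) (g s)) t = dot (V3_derive f t) (g t) + dot (f t) (V3_derive g t).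
Proof.
  intros Hf Hg.
  destruct (Hf t) as (? & ? & ?), (Hg t) as (? & ? & ?).
  unfold dot, V3_derive; simpl.
  rewrite !Derive_plus by auto using ex_derive_plus, ex_derive_mult.
  rewrite !Derive_mult by assumption.
  ring.
Qed.

Lemma ex_derive_dot (f g : R -> V3) t :
  V3_differentiable f -> V3_differentiable g ->
  ex_derive (fun s => dot (f s) (g s)) t.
Proof.
  intros Hf Hg.
  destruct (Hf t) as (? & ? & ?), (Hg t) as (? & ? & ?).
  unfold dot; auto using ex_derive_plus, ex_derive_mult.
Qed.

Lemma dot_comm (a b : V3) : dot a b = dot b a.
Proof. unfold dot; ring. Qed.

Lemma V3_differentiable_cross (f g : R -> V3) :
  V3_differentiable f -> V3_differentiable g ->
  V3_differentiable (fun s => cross (f s) (g s)).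
Proof.
  intros Hf Hg t.
  destruct (Hf t) as (? & ? & ?), (Hg t) as (? & ? & ?).
  simpl; repeat split; apply ex_derive_mult_minus; assumption.
Qed.

Lemma V3_derive_cross (f g : R -> V3) t :
  V3_differentiable f -> V3_differentiable g ->
  V3_derive (fun s => cross (f s) (g s)) t =
  vadd (cross (V3_derive f t) (g t)) (cross (f t) (V3_derive g t)).
Proof.
  intros Hf Hg.
  destruct (Hf t) as (? & ? & ?), (Hg t) as (? & ? & ?).
  unfold V3_derive, vadd, cross; simpl.
  rewrite !Derive_mult_minus by assumption.
  f_equal; ring.
Qed.

Lemma V3_derive_vadd (f g : R -> V3) t :
  V3_differentiable f -> V3_differentiable g ->
  V3_derive (fun s => vadd (f s) (g s)) t = vadd (V3_derive f t) (V3_derive g t).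
Proof.
  intros Hf Hg.
  destruct (Hf t) as (? & ? & ?), (Hg t) as (? & ? & ?).
  unfold V3_derive, vadd; simpl.
  f_equal; apply Derive_plus; assumption.
Qed.

Definition DV_differentiable (F : R -> DV) : Prop :=
  V3_differentiable (fun s => re (F s)) /\ V3_differentiable (fun s => du (F s)).

Lemma DV_derive_dcross (F G : R -> DV) t :
  DV_differentiable F -> DV_differentiable G ->
  DV_derive (fun s => dcross (F s) (G s)) t =
  dvadd (dcross (DV_derive F t) (G t)) (dcross (F t) (DV_derive G t)).
Proof.
  intros [HF HF'] [HG HG'].
  unfold DV_derive, dcross, dvadd; simpl.
  rewrite V3_derive_vadd by (apply V3_differentiable_cross; assumption).
  rewrite !V3_derive_cross by assumption.
  f_equal.
  destruct (V3_derive (fun s => re (F s)) t), (V3_derive (fun s => du (F s)) t),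
    (V3_derive (fun s => re (G s)) t), (V3_derive (fun s => du (G s)) t),
    (re (F t)), (du (F t)), (re (G t)), (du (G t)).
  unfold vadd, cross; simpl; f_equal; ring.
Qed.

Lemma ddot_comm (X Y : DV) : ddot X Y = ddot Y X.
Proof.
  destruct X as [[] []], Y as [[] []].
  unfold ddot, dot; simpl; f_equal; ring.
Qed.

Lemma ddot_derive_self (F : R -> DV) (c : DN) t :
  DV_differentiable F -> (forall s, ddot (F s) (F s) = c) ->
  ddot (F t) (DV_derive F t) = mkDN 0 0.
Proof.
  intros [HF HF'] Hc.
  assert (Hre : Derive (fun s => dot (re (F s)) (re (F s))) t = 0).
  { rewrite (Derive_ext _ (fun _ => dre c)) by (intro s; rewrite <- (Hc s); reflexivity).
    apply Derive_const. }
  assert (Hdu : Derive (fun s => dot (du (F s)) (re (F s)) + dot (re (F s)) (du (F s))) t = 0).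
  { rewrite (Derive_ext _ (fun _ => ddu c)) by (intro s; rewrite <- (Hc s); reflexivity).
    apply Derive_const. }
  rewrite Derive_plus in Hdu by (apply ex_derive_dot; assumption).
  rewrite Derive_dot in Hre by assumption.
  rewrite !Derive_dot in Hdu by assumption.
  unfold ddot, DV_derive; simpl.
  rewrite (dot_comm (V3_derive _ t) (re (F t))) in Hre.
  rewrite (dot_comm (V3_derive _ t) (re (F t))), (dot_comm (V3_derive _ t) (du (F t))) in Hdu.
  f_equal; lra.
Qed.

Definition dadd (u v : DN) : DN := mkDN (dre u + dre v) (ddu u + ddu v).
Definition dsub (u v : DN) : DN := mkDN (dre u - dre v) (ddu u - ddu v).
Definition dmul (u v : DN) : DN := mkDN (dre u * dre v) (dre u * ddu v + ddu u * dre v).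

Lemma ddot_dvaddl (X Y Z : DV) : ddot (dvadd X Y) Z = dadd (ddot X Z) (ddot Y Z).
Proof.
  destruct X as [[] []], Y as [[] []], Z as [[] []].
  unfold ddot, dvadd, dadd, dot, vadd; simpl; f_equal; ring.
Qed.

Lemma ddot_dcross_dcross (X Y Z W : DV) :
  ddot (dcross X Y) (dcross Z W) =
  dsub (dmul (ddot X Z) (ddot Y W)) (dmul (ddot X W) (ddot Y Z)).
Proof.
  destruct X as [[] []], Y as [[] []], Z as [[] []], W as [[] []].
  unfold ddot, dcross, dsub, dmul, dot, cross, vadd; simpl; f_equal; ring.
Qed.

Lemma ddet_derive_dcross (F G : R -> DV) t :
  DV_differentiable F -> DV_differentiable G ->
  (forall s, ddot (F s) (F s) = mkDN 1 0) -> ddot (F t) (G t) = mkDN 0 0 ->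
  ddet (DV_derive (fun s => dcross (F s) (G s)) t) (F t) (DV_derive F t) =
  ddot (DV_derive F t) (DV_derive G t).
Proof.
  intros HF HG Hunit Horth.
  pose proof (ddot_derive_self F (mkDN 1 0) t HF Hunit) as HFF'.
  unfold ddet.
  rewrite DV_derive_dcross, ddot_dvaddl, !ddot_dcross_dcross by assumption.
  rewrite (ddot_comm (DV_derive F t) (F t)), (ddot_comm (G t) (F t)),
    (ddot_comm (DV_derive G t) (DV_derive F t)), Hunit, Horth, HFF'.
  destruct (ddot (DV_derive F t) (DV_derive G t)).
  unfold dadd, dsub, dmul; simpl; f_equal; ring.
Qed.

Theorem proposition1 (a0 a1 a2 a3 : R -> V3) :
  V3_differentiable a0 -> V3_differentiable a1 ->
  V3_differentiable a2 -> V3_differentiable a3 ->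
  (forall t, on_hyperdual_sphere (mkHDV (mkDV (a0 t) (a1 t)) (mkDV (a2 t) (a3 t)))) ->
  let A := fun t => mkDV (a0 t) (a1 t) in
  let As := fun t => mkDV (a2 t) (a3 t) in
  (* Phi_2(t,U) = A x A* + U A, i.e. ruled_surface B Bs with B = A x A*, Bs = A *)
  developable (fun t => dcross (A t) (As t)) A <->
  (forall t, dot (V3_derive a0 t) (V3_derive a2 t) = 0 /\
             dot (V3_derive a0 t) (V3_derive a3 t) =
               - dot (V3_derive a1 t) (V3_derive a2 t)).
Proof.
  intros H0 H1 H2 H3 Hsphere A As.
  assert (Hdet : forall t,
    ddet (DV_derive (fun s => dcross (A s) (As s)) t) (A t) (DV_derive A t) =
    mkDN (dot (V3_derive a0 t) (V3_derive a2 t))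
         (dot (V3_derive a1 t) (V3_derive a2 t) + dot (V3_derive a0 t) (V3_derive a3 t))).
  { intro t.
    apply ddet_derive_dcross.
    - split; assumption.
    - split; assumption.
    - intro s; apply (proj1 (Hsphere s)).
    - apply (proj2 (Hsphere t)). }
  unfold developable; split.
  - intros Hdev t.
    specialize (Hdev t); rewrite Hdet in Hdev; injection Hdev; intros; split; lra.
  - intros Hcond t.
    rewrite Hdet; destruct (Hcond t); f_equal; lra.
Qed.
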